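(* Let $R$ be a ring with unity and involution $*$, and let $a,b,c\in R$. Then $a$ is left dual $(b,c)$-core invertible if and only if $ab$ is strongly left $(b^*,c)$-invertible.
   Context: For $u,b,c\in R$, $u$ is left dual $(b,c)$-core invertible if there exists $x\in Rc$ with $bxub=b$ and $(xub)^*=xub$. $u$ is strongly left $(b,c)$-invertible if $b\in Rcub$ and $cub$ is regular (i.e. there exists $z$ with $cub\,z\,cub=cub$); equivalently there exists $x\in R$ with $xux=x$, $xR=bR$ and $Rx\subseteq Rc$. *)

From HB Require Import structures.
From mathcomp Require Import all_boot all_order all_algebra.
Set Implicit Arguments. Unset Strict Implicit. Unset Printing Implicit Defensive.
Import GRing.Theory.
Local Open Scope ring_scope.

Definition involution (R : pzRingType) (star : R -> R) : Prop :=
  [/\ forall x y, star (x + y) = star x + star y,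
      forall x y, star (x * y) = star y * star x
    & forall x, star (star x) = x].

Definition regular (R : pzRingType) (x : R) : Prop := exists z : R, x * z * x = x.

Definition left_dual_core_inv (R : pzRingType) (star : R -> R) (u b c : R) : Prop :=
  exists x : R, (exists r : R, x = r * c) /\
    b * x * u * b = b /\ star (x * u * b) = x * u * b.

Definition strongly_left_inv (R : pzRingType) (u b c : R) : Prop :=
  (exists r : R, b = r * (c * u * b)) /\ regular (c * u * b).

From mathcomp Require Import all_boot all_order all_algebra.
Set Implicit Arguments. Unset Strict Implicit. Unset Printing Implicit Defensive.
Import GRing.Theory.
Local Open Scope ring_scope.

(* If x = r c is a left dual core inverse, then p = r c a b is hermitian and
   b p = b, hence p b^* = b^*: this puts b^* in R c (ab) b^*, and
   z = a^* c^* r^* r is an inner inverse of c a b b^* because b^* z c a b = p p.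
   Conversely, if b^* = s c a b b^* then q = s c a b satisfies q q^* = q^*,
   which forces q to be hermitian, and b = b q^* = b q shows that s c is a
   left dual core inverse. *)

Section AntiInvolution.

Variables (R : pzRingType) (star : R -> R).
Hypothesis starM : forall x y, star (x * y) = star y * star x.
Hypothesis starK : involutive star.

Lemma herm_of_mul_star (q : R) : q * star q = star q -> star q = q.
Proof. by move=> qq; rewrite -{2}(starK q) -qq starM starK. Qed.

Lemma left_dual_core_inv_strongly_left_inv (u b c : R) :
  left_dual_core_inv star u b c -> strongly_left_inv (u * b) (star b) c.
Proof.
case=> _ [[r ->]] [bpb pH].
have bp : b * (r * c * u * b) = b by move: bpb; rewrite !mulrA.
have pb : r * c * u * b * star b = star b by rewrite -{1}pH -starM bp.
split; first by exists r; rewrite !mulrA pb.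
exists (star u * star c * star r * r).
have pH' : star b * star u * star c * star r = r * c * u * b.
  by rewrite -pH !starM !mulrA.
have -> : c * (u * b) * star b * (star u * star c * star r * r)
            * (c * (u * b) * star b)
          = c * u * b * ((star b * star u * star c * star r)
                         * (r * c * u * b * star b)).
  by rewrite !mulrA.
by rewrite pH' !pb mulrA.
Qed.

Lemma strongly_left_inv_left_dual_core_inv (u b c : R) :
  (exists s, star b = s * (c * (u * b) * star b)) ->
  left_dual_core_inv star u b c.
Proof.
case=> s sb.
have qb : s * c * u * b * star b = star b by rewrite [RHS]sb !mulrA.
have qH : star (s * c * u * b) = s * c * u * b.
  by apply: herm_of_mul_star; rewrite starM mulrA qb.
exists (s * c); split; first by exists s.
split; last exact: qH.
by move: (congr1 star qb); rewrite starM starK qH !mulrA.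
Qed.

End AntiInvolution.

Theorem theorem3p12 (R : pzRingType) (star : R -> R) (a b c : R) :
  involution star ->
  (left_dual_core_inv star a b c <-> strongly_left_inv (a * b) (star b) c).
Proof.
case=> _ starM starK; split.
  exact: left_dual_core_inv_strongly_left_inv.
by case=> sb _; exact: strongly_left_inv_left_dual_core_inv sb.
Qed.
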